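(* Assume (A1) and (A4). Consider Algorithm 2 with parameter choice (P1), any stage $s$ and any inner iteration $k$. Then, with expectation taken over the samples $i_k,j_k$ (conditionally on the past), $$\mathbb E\|x^{k+1}-x^*\|_{G_k}^2\le\mathbb E\|x^k-x^*\|_{G_k}^2-2\eta_s\mathbb E\big(F(x^{k+1})-F(x^* )\big)-2\eta_s\mathbb E\langle\nabla\hat F_{i_k}(x^k)-\nabla F(x^k),x^{k+1}-x^*\rangle+2\eta_s\mathbb E\langle A^T\lambda^{k+1},x^*-x^{k+1}\rangle.$$
   Context: Standing setup. Let $n,m,p,q,r,l\ge1$. For $j\in\{1,\dots,m\}$ let $g_j:\mathbb R^q\to\mathbb R^r$ be continuously differentiable with Jacobian $\partial g_j(x)\in\mathbb R^{r\times q}$; for $i\in\{1,\dots,n\}$ let $f_i:\mathbb R^r\to\mathbb R$ be continuously differentiable. Set $g(x)=\frac1m\sum_{j=1}^m g_j(x)$, $F_i(x)=f_i(g(x))$, $F(x)=\frac1n\sum_{i=1}^nF_i(x)$. Let $R:\mathbb R^l\to\mathbb R$ be closed convex, $A\in\mathbb R^{p\times q}$, $B\in\mathbb R^{p\times l}$; the problem is $\min_{x,\omega}F(x)+R(\omega)$ s.t. $Ax+B\omega=0$, with optimal primal–dual solution $(x^*,\omega^*,\lambda^* )$. $\|\cdot\|$ is the Euclidean norm; for positive definite $H$, $\|x\|_H^2=x^THx$. Assumptions. (A1) Each $F_i$ is convex, $R$ is convex, an optimal primal–dual solution exists, and all $x$-points arising lie in a bounded set. (A4) There is $L_F>0$ with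 $\|(\partial g_j(x))^T\nabla f_i(g(x))-(\partial g_j(y))^T\nabla f_i(g(y))\|\le L_F\|x-y\|$ for all $i,j,x,y$. Algorithm 2 (inputs: integers $S,K\ge1$, $\rho>0$, stepsizes $\eta_s>0$, matrices $G_k$ per stage as below; initial $\tilde x^0=\hat x^0$, $\hat\omega^0$, $\hat\lambda^0$, $\hat G^0=I$). For $s=1,\dots,S$: set $\tilde x=\tilde x^{s-1}$, $x^0=\hat x^{s-1}$, $\omega^0=\hat\omega^{s-1}$, $\lambda^0=\hat\lambda^{s-1}$, $G_0=\hat G^{s-1}$; compute $g(\tilde x)$, $\nabla F(\tilde x)$. For $k=0,\dots,K-1$: (a) $\omega^{k+1}\in\arg\min_\omega R(\omega)+\langle\lambda^k,B\omega\rangle+\frac\rho2\|Ax^k+B\omega\|^2$; (b) compute $g(x^k)$ exactly; (c) draw $i_k$ uniform on $\{1,\dots,n\}$ and $j_k$ uniform on $\{1,\dots,m\}$, independently, and set $\nabla\hat F_{i_k}(x^k)=(\partial g_{j_k}(x^k))^T\nabla f_{i_k}(g(x^k))-(\partial g_{j_k}(\tilde x))^T\nabla f_{i_k}(g(\tilde x))+\nabla F(\tilde x)$; (d) $x^{k+1}=\arg\min_x\langle\nabla\hat F_{i_k}(x^k),x-x^k\rangle+\langle\lambda^k,Ax\rangle+\frac\rho2\|Ax+B\omega^{k+1}\|^2+\frac1{2\eta_s}\|x-x^k\|_{G_k}^2$; (e) $\lambda^{k+1}=\lambda^k+\rho(Ax^{k+1}+B\omega^{k+1})$. End of stage $s$: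 $\tilde x^s=\frac1K\sum_{k=1}^Kx^k$, $\tilde\omega^s=\frac1K\sum_{k=1}^K\omega^k$, $\hat x^s=x^K$, $\hat\omega^s=\omega^K$, $\hat\lambda^s=\lambda^K$, $\hat G^s=G_K$. Parameter choice (P1): $\eta_s=\frac1{(s+1)L_F}$, and in stage $s$ the matrices $G_0,\dots,G_K$ are scalar multiples of the identity with $\frac1sI=G_0\succeq G_1\succeq\dots\succeq G_{K-1}=G_K=\frac1{s+1}I$. *)

From Stdlib Require Import Reals.
From mathcomp Require Import ssreflect ssrfun ssrbool eqtype ssrnat seq fintype bigop.
Set Implicit Arguments. Unset Strict Implicit.
Open Scope R_scope.

Definition vec (n : nat) := 'I_n -> R.
Definition mat (m n : nat) := 'I_m -> 'I_n -> R.

Definition rsum (n : nat) (F : 'I_n -> R) : R := \big[Rplus/0]_(i < n) F i.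

Definition vadd n (u v : vec n) : vec n := fun a => u a + v a.
Definition vsub n (u v : vec n) : vec n := fun a => u a - v a.
Definition vscal n (c : R) (u : vec n) : vec n := fun a => c * u a.
Definition vsum (I n : nat) (F : 'I_I -> vec n) : vec n := fun a => rsum (fun i => F i a).

Definition dot n (u v : vec n) : R := rsum (fun a => u a * v a).
Definition nsq n (u : vec n) : R := dot u u.
Definition vnorm n (u : vec n) : R := sqrt (nsq u).
(* ||u||_G^2 for G = c * I (all matrices G_k of (P1) are scalar multiples of I) *)
Definition gnorm2 n (c : R) (u : vec n) : R := c * nsq u.

Definition mv m n (M : mat m n) (x : vec n) : vec m := fun a => rsum (fun b => M a b * x b).
Definition tmv m n (M : mat m n) (y : vec m) : vec n := fun b => rsum (fun a => M a b * y a).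

Definition has_jacobian a b (f : vec a -> vec b) (J : vec a -> mat b a) : Prop :=
  forall x eps, 0 < eps -> exists delta, 0 < delta /\
    forall y, vnorm (vsub y x) < delta ->
      vnorm (vsub (vsub (f y) (f x)) (mv (J x) (vsub y x))) <= eps * vnorm (vsub y x).
Definition mat_continuous a b (J : vec a -> mat b a) : Prop :=
  forall x eps, 0 < eps -> exists delta, 0 < delta /\
    forall y, vnorm (vsub y x) < delta -> forall i j, Rabs (J y i j - J x i j) < eps.
Definition C1_map a b (f : vec a -> vec b) (J : vec a -> mat b a) : Prop :=
  has_jacobian f J /\ mat_continuous J.

Definition has_gradient a (f : vec a -> R) (gr : vec a -> vec a) : Prop :=
  forall x eps, 0 < eps -> exists delta, 0 < delta /\
    forall y, vnorm (vsub y x) < delta ->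
      Rabs (f y - f x - dot (gr x) (vsub y x)) <= eps * vnorm (vsub y x).
Definition vec_continuous a b (h : vec a -> vec b) : Prop :=
  forall x eps, 0 < eps -> exists delta, 0 < delta /\
    forall y, vnorm (vsub y x) < delta -> vnorm (vsub (h y) (h x)) < eps.
Definition C1_scalar a (f : vec a -> R) (gr : vec a -> vec a) : Prop :=
  has_gradient f gr /\ vec_continuous gr.

Definition convex a (h : vec a -> R) : Prop :=
  forall x y t, 0 <= t <= 1 ->
    h (vadd (vscal t x) (vscal (1 - t) y)) <= t * h x + (1 - t) * h y.
(* closed = lower semicontinuous (for a real-valued function) *)
Definition lsc a (h : vec a -> R) : Prop :=
  forall x eps, 0 < eps -> exists delta, 0 < delta /\
    forall y, vnorm (vsub y x) < delta -> h x - eps < h y.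

Section Problem.
Variables (n m q r : nat).
Variables (g : 'I_m -> vec q -> vec r) (Jg : 'I_m -> vec q -> mat r q)
          (f : 'I_n -> vec r -> R) (gf : 'I_n -> vec r -> vec r).

Definition gbar (x : vec q) : vec r := vscal (/ INR m) (vsum (fun j => g j x)).
Definition Jbar (x : vec q) : mat r q := fun a b => / INR m * rsum (fun j => Jg j x a b).
Definition Fi (i : 'I_n) (x : vec q) : R := f i (gbar x).
Definition Fobj (x : vec q) : R := / INR n * rsum (fun i => Fi i x).
Definition gradF (x : vec q) : vec q :=
  vscal (/ INR n) (vsum (fun i => tmv (Jbar x) (gf i (gbar x)))).
(* the variance-reduced estimator of step (c) *)
Definition sgrad (i : 'I_n) (j : 'I_m) (x xt : vec q) : vec q :=
  vadd (vsub (tmv (Jg j x) (gf i (gbar x))) (tmv (Jg j xt) (gf i (gbar xt)))) (gradF xt).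
End Problem.

Definition Lagr n m p q r l (g : 'I_m -> vec q -> vec r) (f : 'I_n -> vec r -> R)
  (Rw : vec l -> R) (A : mat p q) (B : mat p l) (x : vec q) (w : vec l) (lam : vec p) : R :=
  Fobj g f x + Rw w + dot lam (vadd (mv A x) (mv B w)).
Definition opt_primal_dual n m p q r l (g : 'I_m -> vec q -> vec r) (f : 'I_n -> vec r -> R)
  (Rw : vec l -> R) (A : mat p q) (B : mat p l) (xs : vec q) (ws : vec l) (ls : vec p) : Prop :=
  forall x w lam,
    Lagr g f Rw A B xs ws lam <= Lagr g f Rw A B xs ws ls /\
    Lagr g f Rw A B xs ws ls <= Lagr g f Rw A B x w ls.

(* a sample path: xi s k = (i_k, j_k) drawn at inner iteration k of stage s *)
Definition spath (n m : nat) := nat -> nat -> ('I_n * 'I_m)%type.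
Definition upd n m (xi : spath n m) (s k : nat) (ij : 'I_n * 'I_m) : spath n m :=
  fun s' k' => if (s' == s) && (k' == k) then ij else xi s' k'.

(* X xi s k = x^k of stage s, W = omega^k, Lam = lambda^k, Xt xi s = tilde x^s,
   along sample path xi; c s k is the scalar with G_k = c s k * I in stage s. *)
Definition IsRun n m p q r l (g : 'I_m -> vec q -> vec r) (Jg : 'I_m -> vec q -> mat r q)
  (f : 'I_n -> vec r -> R) (gf : 'I_n -> vec r -> vec r) (Rw : vec l -> R)
  (A : mat p q) (B : mat p l) (S K : nat) (rho : R) (eta : nat -> R) (c : nat -> nat -> R)
  (xhat0 : vec q) (what0 : vec l) (lhat0 : vec p)
  (X : spath n m -> nat -> nat -> vec q) (W : spath n m -> nat -> nat -> vec l)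
  (Lam : spath n m -> nat -> nat -> vec p) (Xt : spath n m -> nat -> vec q) : Prop :=
  forall xi : spath n m,
    Xt xi 0%N = xhat0 /\
    forall s, (1 <= s <= S)%N ->
      X xi s 0%N = (if s == 1%N then xhat0 else X xi s.-1 K) /\
      W xi s 0%N = (if s == 1%N then what0 else W xi s.-1 K) /\
      Lam xi s 0%N = (if s == 1%N then lhat0 else Lam xi s.-1 K) /\
      (forall k, (k < K)%N ->
        let xk := X xi s k in let lk := Lam xi s k in
        let w1 := W xi s k.+1 in let x1 := X xi s k.+1 in
        (forall w, Rw w1 + dot lk (mv B w1) + rho / 2 * nsq (vadd (mv A xk) (mv B w1))
                   <= Rw w + dot lk (mv B w) + rho / 2 * nsq (vadd (mv A xk) (mv B w))) /\
        (* (b)-(d) x-update with the estimator built from (i_k, j_k) = xi s k *)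
        (let v := sgrad g Jg gf (xi s k).1 (xi s k).2 xk (Xt xi s.-1) in
         forall x, dot v (vsub x1 xk) + dot lk (mv A x1) + rho / 2 * nsq (vadd (mv A x1) (mv B w1))
                     + / (2 * eta s) * gnorm2 (c s k) (vsub x1 xk)
                   <= dot v (vsub x xk) + dot lk (mv A x) + rho / 2 * nsq (vadd (mv A x) (mv B w1))
                     + / (2 * eta s) * gnorm2 (c s k) (vsub x xk)) /\
        Lam xi s k.+1 = vadd lk (vscal rho (vadd (mv A x1) (mv B w1)))) /\
      Xt xi s = vscal (/ INR K) (vsum (fun k : 'I_K => X xi s k.+1)).

(* The inequality holds for every sample (i_k, j_k), so taking the expectation
   only averages it.  For a fixed sample, the optimality condition of the
   x-update (d), rewritten with lambda^{k+1} from (e), is a variational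
   inequality at x^{k+1}.  It is combined with the convexity inequality
   F(x^k) + <grad F(x^k), z - x^k> <= F(z) at z = x^* and the descent lemma
   F(x^{k+1}) <= F(x^k) + <grad F(x^k), x^{k+1} - x^k> + L_F/2 |x^{k+1} - x^k|^2;
   the quadratic term is absorbed by |x^{k+1} - x^k|_{G_k}^2 / (2 eta_s)
   because eta_s L_F = 1/(s+1) <= G_k under (P1).  The chain rule only yields
   one-sided directional derivatives of F, so the descent lemma is obtained by
   summing the convexity inequality over a fine partition of the segment
   [x, y] and letting the mesh go to zero. *)

From HB Require Import structures.
From Stdlib Require Import Reals Lra Psatz FunctionalExtensionality.
From mathcomp Require Import ssreflect ssrfun ssrbool eqtype ssrnat fintype bigop.
From mathcomp Require Import zify.
Open Scope R_scope.
Set Implicit Arguments. Unset Strict Implicit.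
Set Warnings "-notation-overridden,-redundant-canonical-projection".

HB.instance Definition _ := Monoid.isComLaw.Build R 0 Rplus
  (fun a b c => esym (Rplus_assoc a b c)) Rplus_comm Rplus_0_l.

Lemma rsum_ext n (F G : 'I_n -> R) : (forall i, F i = G i) -> rsum F = rsum G.
Proof. by move=> FG; apply: eq_bigr => i _. Qed.

Lemma rsumD n (F G : 'I_n -> R) : rsum (fun i => F i + G i) = rsum F + rsum G.
Proof. exact: big_split. Qed.

Lemma rsumZ n c (F : 'I_n -> R) : rsum (fun i => c * F i) = c * rsum F.
Proof.
apply: (big_ind2 (fun a b => a = c * b)); first ring.
- by move=> a b a' b' -> ->; ring.
- by [].
Qed.

Lemma rsumZr n c (F : 'I_n -> R) : rsum (fun i => F i * c) = rsum F * c.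
Proof. by rewrite Rmult_comm -rsumZ; apply: rsum_ext => i; ring. Qed.

Lemma rsumB n (F G : 'I_n -> R) : rsum (fun i => F i - G i) = rsum F - rsum G.
Proof.
have -> : rsum F - rsum G = rsum F + - 1 * rsum G by ring.
by rewrite -rsumZ -rsumD; apply: rsum_ext => i; ring.
Qed.

Lemma rsum_exch n m (F : 'I_n -> 'I_m -> R) :
  rsum (fun i => rsum (fun j => F i j)) = rsum (fun j => rsum (fun i => F i j)).
Proof. exact: exchange_big. Qed.

Lemma rsum_mul n m (F : 'I_n -> R) (G : 'I_m -> R) :
  rsum F * rsum G = rsum (fun i => rsum (fun j => F i * G j)).
Proof.
rewrite Rmult_comm -rsumZ; apply: rsum_ext => i.
by rewrite Rmult_comm -rsumZ.
Qed.

Lemma rsum_le n (F G : 'I_n -> R) : (forall i, F i <= G i) -> rsum F <= rsum G.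
Proof.
move=> FG; apply: (big_ind2 (fun a b => a <= b)); first lra.
- by move=> *; lra.
- by move=> i _; apply: FG.
Qed.

Lemma rsum_const n a : rsum (fun _ : 'I_n => a) = INR n * a.
Proof.
rewrite /rsum big_const_ord; elim: n => [|n IH]; first by rewrite /=; ring.
change (iter n.+1 (Rplus a) 0) with (a + iter n (Rplus a) 0).
by rewrite IH S_INR; ring.
Qed.

Lemma rsum_ge0 n (F : 'I_n -> R) : (forall i, 0 <= F i) -> 0 <= rsum F.
Proof. by move=> F0; rewrite -(Rmult_0_r (INR n)) -rsum_const; apply: rsum_le. Qed.

Lemma Rabs_rsum_le n (F : 'I_n -> R) : Rabs (rsum F) <= rsum (fun i => Rabs (F i)).
Proof.
apply: (big_ind2 (fun a b => Rabs a <= b)).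
- by rewrite Rabs_R0; lra.
- by move=> a b a' b' ? ?; apply: Rle_trans (Rabs_triang _ _) _; lra.
- by move=> i _; lra.
Qed.

Lemma avg_le n (F : 'I_n -> R) C : (0 < n)%N -> (forall i, F i <= C) -> / INR n * rsum F <= C.
Proof.
move=> n0 FC; have n0' : 0 < INR n by apply: lt_0_INR; lia.
apply: Rle_trans (Rmult_le_compat_l _ _ _ _ (rsum_le FC)) _.
  by left; apply: Rinv_0_lt_compat.
by rewrite rsum_const; right; field; lra.
Qed.

Lemma Rabs_avg_le n (F : 'I_n -> R) C :
  (0 < n)%N -> (forall i, Rabs (F i) <= C) -> Rabs (/ INR n * rsum F) <= C.
Proof.
move=> n0 FC; have n0' : 0 < INR n by apply: lt_0_INR; lia.
rewrite Rabs_mult Rabs_inv Rabs_pos_eq; last lra.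
apply: Rle_trans (Rmult_le_compat_l _ _ _ _ (Rabs_rsum_le F)) _.
  by left; apply: Rinv_0_lt_compat.
exact: avg_le.
Qed.

Ltac vec_ring :=
  rewrite /nsq /dot /vadd /vsub /vscal -?rsumZ -?rsumB -?rsumD;
  apply: rsum_ext => ?; ring.

Lemma nsq_ge0 n (u : vec n) : 0 <= nsq u.
Proof. by apply: rsum_ge0 => i; nra. Qed.

Lemma vnorm_ge0 n (u : vec n) : 0 <= vnorm u.
Proof. exact: sqrt_pos. Qed.

Lemma vnorm_sq n (u : vec n) : vnorm u * vnorm u = nsq u.
Proof. by rewrite sqrt_sqrt //; apply: nsq_ge0. Qed.

Lemma vnorm_le n (u : vec n) a : 0 <= a -> nsq u <= a * a -> vnorm u <= a.
Proof. by move=> a0 ua; rewrite -(sqrt_square a) //; apply: sqrt_le_1_alt. Qed.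

Lemma dotC n (u v : vec n) : dot u v = dot v u.
Proof. by apply: rsum_ext => i; ring. Qed.

Lemma dotZl n c (u v : vec n) : dot (vscal c u) v = c * dot u v.
Proof. by vec_ring. Qed.

Lemma dot_vsuml I n (F : 'I_I -> vec n) v : dot (vsum F) v = rsum (fun i => dot (F i) v).
Proof.
rewrite /dot /vsum -rsum_exch; apply: rsum_ext => a.
by rewrite Rmult_comm -rsumZ; apply: rsum_ext => i; ring.
Qed.

Lemma dot_tmv m n (M : mat m n) y x : dot (tmv M y) x = dot y (mv M x).
Proof.
rewrite /dot /tmv /mv.
transitivity (rsum (fun b => rsum (fun a => M a b * y a * x b))).
  by apply: rsum_ext => b; rewrite Rmult_comm -rsumZ; apply: rsum_ext => a; ring.
rewrite rsum_exch; apply: rsum_ext => a.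
by rewrite -rsumZ; apply: rsum_ext => b; ring.
Qed.

Lemma mvZ m n (M : mat m n) c x : mv M (vscal c x) = vscal c (mv M x).
Proof.
by apply: functional_extensionality => a; rewrite /mv /vscal -rsumZ; apply: rsum_ext => b; ring.
Qed.

Lemma dot_sq_le n (u v : vec n) : dot u v * dot u v <= nsq u * nsq v.
Proof.
have lagrange : rsum (fun i => rsum (fun j => (u i * v j - u j * v i) ^ 2))
                = 2 * (nsq u * nsq v - dot u v * dot u v).
  rewrite /nsq /dot !rsum_mul.
  transitivity (rsum (fun i => rsum (fun j => u i * u i * (v j * v j)))
              + rsum (fun i => rsum (fun j => u j * u j * (v i * v i)))
              - 2 * rsum (fun i => rsum (fun j => u i * v i * (u j * v j)))).
    rewrite -rsumZ -rsumD -rsumB; apply: rsum_ext => i.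
    by rewrite -rsumZ -rsumD -rsumB; apply: rsum_ext => j; ring.
  by rewrite (rsum_exch (fun i j => u j * u j * (v i * v i))); ring.
have : 0 <= rsum (fun i => rsum (fun j => (u i * v j - u j * v i) ^ 2)).
  by apply: rsum_ge0 => i; apply: rsum_ge0 => j; apply: pow2_ge_0.
lra.
Qed.

Lemma Rabs_dot_le n (u v : vec n) : Rabs (dot u v) <= vnorm u * vnorm v.
Proof.
rewrite -sqrt_Rsqr_abs /vnorm -sqrt_mult; try exact: nsq_ge0.
exact/sqrt_le_1_alt/dot_sq_le.
Qed.

Lemma dot_le n (u v : vec n) : dot u v <= vnorm u * vnorm v.
Proof. exact: Rle_trans (Rle_abs _) (Rabs_dot_le u v). Qed.

Lemma vnormZ n c (u : vec n) : vnorm (vscal c u) = Rabs c * vnorm u.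
Proof.
rewrite /vnorm; have -> : nsq (vscal c u) = Rsqr c * nsq u by rewrite /Rsqr; vec_ring.
by rewrite sqrt_mult ?sqrt_Rsqr_abs //; [apply: Rle_0_sqr | apply: nsq_ge0].
Qed.

Lemma vnormD n (u v : vec n) : vnorm (vadd u v) <= vnorm u + vnorm v.
Proof.
apply: vnorm_le; first by have := vnorm_ge0 u; have := vnorm_ge0 v; lra.
have -> : nsq (vadd u v) = nsq u + 2 * dot u v + nsq v by vec_ring.
by rewrite -!vnorm_sq; have := dot_le u v; lra.
Qed.

Lemma vnorm_vsum I n (F : 'I_I -> vec n) : vnorm (vsum F) <= rsum (fun i => vnorm (F i)).
Proof.
elim: I F => [|I IH] F.
  rewrite /rsum big_ord0; apply: vnorm_le; first lra.
  by rewrite /nsq /dot /rsum big1 => [|a _]; [lra | rewrite /vsum /rsum big_ord0; ring].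
have -> : vsum F = vadd (vsum (fun i : 'I_I => F (widen_ord (leqnSn I) i))) (F ord_max).
  by apply: functional_extensionality => a; rewrite /vsum /vadd /rsum big_ord_recr.
rewrite /rsum big_ord_recr /=.
by apply: Rle_trans (vnormD _ _) _; apply: Rplus_le_compat_r; apply: IH.
Qed.

Lemma lt_div_mul t del c : 0 < c -> t < del / c -> t * c < del.
Proof.
move=> c0 tc; have -> : del = del / c * c by field; lra.
exact: Rmult_lt_compat_r.
Qed.

Lemma div_succ_mul_le e a : 0 <= e -> 0 <= a -> e / (a + 1) * a <= e.
Proof.
move=> e0 a0; have -> : e / (a + 1) * a = e - e / (a + 1) by field; lra.
have : 0 <= e / (a + 1) by apply: Rmult_le_pos => //; left; apply: Rinv_0_lt_compat; lra.
lra.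
Qed.

Lemma finite_min_delta k (P : 'I_k -> R -> Prop) :
  (forall i, exists d, 0 < d /\ forall t, 0 < t < d -> P i t) ->
  exists d, 0 < d /\ forall i t, 0 < t < d -> P i t.
Proof.
move=> hP.
suff /(_ k) [d [d0 hd]] : forall k0, exists d, 0 < d /\
    forall (i : 'I_k) t, (i < k0)%N -> 0 < t < d -> P i t.
  by exists d; split => // i t; apply: hd.
elim=> [|k0 [d [d0 hd]]]; first by exists 1; split; [lra|].
case: (ltnP k0 k) => k0k; last by exists d; split => // i t _; apply: hd; have := ltn_ord i; lia.
have [d' [d'0 hd']] := hP (Ordinal k0k).
exists (Rmin d d'); split; first exact: Rmin_glb_lt.
move=> i t; rewrite ltnS leq_eqVlt => /orP[/eqP ik0|ik0] t_lt;
  have := Rmin_l d d'; have := Rmin_r d d' => ? ?.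
- have -> : i = Ordinal k0k by apply: val_inj.
  by apply: hd'; lra.
- by apply: hd => //; lra.
Qed.

Definition ray q (x d : vec q) (t : R) : vec q := fun b => x b + t * d b.

Definition vdir_deriv a b (h : vec a -> vec b) (x d : vec a) (v : vec b) : Prop :=
  forall eps, 0 < eps -> exists del, 0 < del /\ forall t, 0 < t < del ->
    vnorm (vsub (vsub (h (ray x d t)) (h x)) (vscal t v)) <= eps * t.

Definition dir_deriv a (h : vec a -> R) (x d : vec a) (v : R) : Prop :=
  forall eps, 0 < eps -> exists del, 0 < del /\ forall t, 0 < t < del ->
    Rabs (h (ray x d t) - h x - t * v) <= eps * t.

Lemma ray_sub q (x d : vec q) t : vsub (ray x d t) x = vscal t d.
Proof. by apply: functional_extensionality => b; rewrite /vsub /ray /vscal; ring. Qed.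

Lemma jacobian_vdir_deriv a b (h : vec a -> vec b) J x d :
  has_jacobian h J -> vdir_deriv h x d (mv (J x) d).
Proof.
move=> hJ eps eps0; have d0 := vnorm_ge0 d.
have e0 : 0 < eps / (vnorm d + 1) by apply: Rdiv_lt_0_compat; lra.
have [del [del0 hdel]] := hJ x _ e0.
exists (del / (vnorm d + 1)); split; first by apply: Rdiv_lt_0_compat; lra.
move=> t [t0 /lt_div_mul t_lt]; have {}t_lt := t_lt ltac:(lra).
have hnorm : vnorm (vsub (ray x d t) x) = t * vnorm d.
  by rewrite ray_sub vnormZ Rabs_pos_eq //; lra.
rewrite -mvZ -(ray_sub x d t); apply: Rle_trans (hdel _ _) _; rewrite hnorm; first nra.
have := div_succ_mul_le (Rlt_le _ _ eps0) d0; nra.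
Qed.

Lemma vdir_deriv_avg I a b (h : 'I_I -> vec a -> vec b) x d v : (0 < I)%N ->
  (forall j, vdir_deriv (h j) x d (v j)) ->
  vdir_deriv (fun y => vscal (/ INR I) (vsum (fun j => h j y))) x d (vscal (/ INR I) (vsum v)).
Proof.
move=> I0 hv eps eps0; have I0' : 0 < INR I by apply: lt_0_INR; lia.
have [del [del0 hdel]] := finite_min_delta (fun j => hv j eps eps0).
exists del; split => // t t_lt.
set e := fun j => vsub (vsub (h j (ray x d t)) (h j x)) (vscal t (v j)).
have -> : vsub (vsub (vscal (/ INR I) (vsum (fun j => h j (ray x d t))))
                      (vscal (/ INR I) (vsum (fun j => h j x))))
               (vscal t (vscal (/ INR I) (vsum v))) = vscal (/ INR I) (vsum e).
  apply: functional_extensionality => c.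
  by rewrite /e /vsub /vscal /vsum !rsumB rsumZ; ring.
rewrite vnormZ Rabs_pos_eq; last by left; apply: Rinv_0_lt_compat.
apply: Rle_trans (Rmult_le_compat_l _ _ _ _ (vnorm_vsum e)) _.
  by left; apply: Rinv_0_lt_compat.
by apply: avg_le => // j; apply: hdel.
Qed.

Lemma dir_deriv_avg I a (h : 'I_I -> vec a -> R) x d v : (0 < I)%N ->
  (forall i, dir_deriv (h i) x d (v i)) ->
  dir_deriv (fun y => / INR I * rsum (fun i => h i y)) x d (/ INR I * rsum v).
Proof.
move=> I0 hv eps eps0.
have [del [del0 hdel]] := finite_min_delta (fun i => hv i eps eps0).
exists del; split => // t t_lt.
have -> : / INR I * rsum (fun i => h i (ray x d t)) - / INR I * rsum (fun i => h i x)
          - t * (/ INR I * rsum v)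
        = / INR I * rsum (fun i => h i (ray x d t) - h i x - t * v i).
  by rewrite !rsumB rsumZ; ring.
by apply: Rabs_avg_le => // i; apply: hdel.
Qed.

Lemma dir_deriv_comp a b (h : vec a -> vec b) (f : vec b -> R) gf x d v :
  vdir_deriv h x d v -> has_gradient f gf ->
  dir_deriv (fun y => f (h y)) x d (dot (gf (h x)) v).
Proof.
move=> hv hf eps eps0.
set u := h x; set V := vnorm v; set Gn := vnorm (gf u).
have V0 : 0 <= V := vnorm_ge0 v; have Gn0 : 0 <= Gn := vnorm_ge0 (gf u).
pose ef := eps / 2 / (V + 1); pose eg := eps / 2 / (Gn + 1).
have [d1 [d1_0 h1]] := hv 1 Rlt_0_1.
have eg0 : 0 < eg by apply: Rdiv_lt_0_compat; lra.
have ef0 : 0 < ef by apply: Rdiv_lt_0_compat; lra.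
have [d2 [d2_0 h2]] := hv eg eg0.
have [df [df0 hdf]] := hf u ef ef0.
exists (Rmin (Rmin d1 d2) (df / (V + 1))); split.
  by apply: Rmin_glb_lt; [apply: Rmin_glb_lt | apply: Rdiv_lt_0_compat; lra].
move=> t [t0 t_lt].
have := Rmin_l (Rmin d1 d2) (df / (V + 1)); have := Rmin_r (Rmin d1 d2) (df / (V + 1)).
have := Rmin_l d1 d2; have := Rmin_r d1 d2 => ? ? t_df ?.
have {}t_df : t * (V + 1) < df by apply: lt_div_mul; lra.
have h1t : vnorm (vsub (vsub (h (ray x d t)) u) (vscal t v)) <= 1 * t by apply: h1; lra.
have h2t : vnorm (vsub (vsub (h (ray x d t)) u) (vscal t v)) <= eg * t by apply: h2; lra.
set D := vsub (h (ray x d t)) u in h1t h2t *.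
have D_bound : vnorm D <= t * (V + 1).
  have -> : D = vadd (vsub D (vscal t v)) (vscal t v).
    by apply: functional_extensionality => c; rewrite /vadd /vsub /vscal; ring.
  apply: Rle_trans (vnormD _ _) _; rewrite vnormZ Rabs_pos_eq -/V; lra.
have outer : Rabs (f (h (ray x d t)) - f u - dot (gf u) D) <= ef * (t * (V + 1)).
  apply: Rle_trans (hdf _ _) _; first by rewrite -/D; lra.
  by apply: Rmult_le_compat_l => //; left; apply: Rdiv_lt_0_compat; lra.
have inner : Rabs (dot (gf u) D - t * dot (gf u) v) <= Gn * (eg * t).
  have -> : dot (gf u) D - t * dot (gf u) v = dot (gf u) (vsub D (vscal t v)) by vec_ring.
  by apply: Rle_trans (Rabs_dot_le _ _) _; apply: Rmult_le_compat_l.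
have -> : f (h (ray x d t)) - f u - t * dot (gf u) v
        = (f (h (ray x d t)) - f u - dot (gf u) D) + (dot (gf u) D - t * dot (gf u) v) by ring.
apply: Rle_trans (Rabs_triang _ _) _.
have ef_V : ef * (t * (V + 1)) = eps / 2 * t by rewrite /ef; field; lra.
have := div_succ_mul_le (Rlt_le 0 (eps / 2) ltac:(lra)) Gn0; rewrite -/eg; nra.
Qed.

Lemma nonneg_of_small_quadratic lin quad :
  (forall t, 0 < t <= 1 -> 0 <= t * lin + t * t * quad) -> 0 <= lin.
Proof.
move=> H; apply: Rle_plus_epsilon => eps eps0.
have quad0 := Rabs_pos quad.
pose t := Rmin 1 (eps / (Rabs quad + 1)).
have t0 : 0 < t by apply: Rmin_glb_lt; [lra | apply: Rdiv_lt_0_compat; lra].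
have t1 : t <= 1 := Rmin_l _ _.
have t_quad : t * Rabs quad <= eps.
  apply: Rle_trans (div_succ_mul_le (Rlt_le _ _ eps0) quad0).
  by apply: Rmult_le_compat_r => //; apply: Rmin_r.
have := H t (conj t0 t1); have := Rle_abs quad; have := Rle_abs (- quad); rewrite Rabs_Ropp.
nra.
Qed.

Definition x_step_objective p q l (A : mat p q) (B : mat p l) (v xk : vec q) (lk : vec p)
    (w1 : vec l) (rho a cc : R) (x : vec q) : R :=
  dot v (vsub x xk) + dot lk (mv A x) + rho / 2 * nsq (vadd (mv A x) (mv B w1))
  + a * gnorm2 cc (vsub x xk).

Lemma x_step_optimality p q l (A : mat p q) (B : mat p l) v xk x1 xs lk w1 rho a cc :
  (forall x, x_step_objective A B v xk lk w1 rho a cc x1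
             <= x_step_objective A B v xk lk w1 rho a cc x) ->
  0 <= dot v (vsub xs x1) + dot (tmv A (vadd lk (vscal rho (vadd (mv A x1) (mv B w1))))) (vsub xs x1)
       + 2 * a * cc * dot (vsub x1 xk) (vsub xs x1).
Proof.
move=> x1_min; set d := vsub xs x1; set r := vadd (mv A x1) (mv B w1).
apply: (nonneg_of_small_quadratic (quad := rho / 2 * nsq (mv A d) + a * cc * nsq d)) => t _.
have := x1_min (ray x1 d t); rewrite /x_step_objective /gnorm2 -/r.
have -> : mv A (ray x1 d t) = ray (mv A x1) (mv A d) t.
  by apply: functional_extensionality => c; rewrite /mv /ray -rsumZ -rsumD; apply: rsum_ext => b; ring.
have -> : dot v (vsub (ray x1 d t) xk) = dot v (vsub x1 xk) + t * dot v d by rewrite /ray; vec_ring.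
have -> : dot lk (ray (mv A x1) (mv A d) t) = dot lk (mv A x1) + t * dot lk (mv A d).
  by rewrite /ray; vec_ring.
have -> : nsq (vadd (ray (mv A x1) (mv A d) t) (mv B w1))
          = nsq r + 2 * t * dot r (mv A d) + t * t * nsq (mv A d) by rewrite /r /ray; vec_ring.
have -> : nsq (vsub (ray x1 d t) xk)
          = nsq (vsub x1 xk) + 2 * t * dot (vsub x1 xk) d + t * t * nsq d by rewrite /ray; vec_ring.
have -> : dot (tmv A (vadd lk (vscal rho r))) d = dot lk (mv A d) + rho * dot r (mv A d).
  by rewrite dot_tmv; vec_ring.
nra.
Qed.

Lemma ray0 q (x d : vec q) : ray x d 0 = x.
Proof. by apply: functional_extensionality => b; rewrite /ray; ring. Qed.

Lemma le0_of_le_inv_nat a C : 0 <= C -> (forall N, (0 < N)%N -> a <= C * / INR N) -> a <= 0.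
Proof.
move=> C0 aC; apply: Rle_plus_epsilon => eps eps0.
have e0 : 0 < eps / (C + 1) by apply: Rdiv_lt_0_compat; lra.
have [N [N_eps /ltP N0]] := archimed_cor1 _ e0.
apply: Rle_trans (aC N N0) _.
have : C * / INR N <= C * (eps / (C + 1)) by apply: Rmult_le_compat_l; lra.
have := div_succ_mul_le (Rlt_le _ _ eps0) C0; lra.
Qed.

Section SmoothConvex.
Variables (q : nat) (F : vec q -> R) (G : vec q -> vec q).
Hypothesis F_convex : convex F.
Hypothesis F_dir_deriv : forall x d, dir_deriv F x d (dot (G x) d).

Lemma convex_gradient_ineq x y : F x + dot (G x) (vsub y x) <= F y.
Proof.
set d := vsub y x; set D := dot (G x) d.
suff : D <= F y - F x by lra.
apply: Rle_plus_epsilon => eps eps0.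
have [del [del0 hdel]] := F_dir_deriv x d eps0.
pose t := Rmin (1 / 2) (del / 2).
have t0 : 0 < t by apply: Rmin_glb_lt; lra.
have := Rmin_l (1 / 2) (del / 2); have := Rmin_r (1 / 2) (del / 2); rewrite -/t => ? ?.
have lower : - (eps * t) <= F (ray x d t) - F x - t * D.
  have : Rabs (F (ray x d t) - F x - t * D) <= eps * t by apply: hdel; lra.
  by have := Rle_abs (- (F (ray x d t) - F x - t * D)); rewrite Rabs_Ropp; lra.
have /(F_convex y x) : 0 <= t <= 1 by lra.
have -> : vadd (vscal t y) (vscal (1 - t) x) = ray x d t.
  by apply: functional_extensionality => b; rewrite /ray /d /vadd /vscal /vsub; ring.
move=> upper; apply: (Rmult_le_reg_l t) => //; nra.
Qed.

Variable L : R.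
Hypothesis L_ge0 : 0 <= L.
Hypothesis G_lipschitz : forall x y d,
  dot (G y) d - dot (G x) d <= L * vnorm (vsub y x) * vnorm d.

Lemma ray_increment_le x d a h : 0 <= h -> 0 <= a + h ->
  F (ray x d (a + h)) - F (ray x d a) <= h * (dot (G x) d + L * (a + h) * nsq d).
Proof.
move=> h0 ah0.
have := convex_gradient_ineq (ray x d (a + h)) (ray x d a).
have -> : vsub (ray x d a) (ray x d (a + h)) = vscal (- h) d.
  by apply: functional_extensionality => b; rewrite /ray /vsub /vscal; ring.
rewrite dotC dotZl dotC => grad.
have := G_lipschitz x (ray x d (a + h)) d.
rewrite ray_sub vnormZ Rabs_pos_eq // Rmult_assoc (Rmult_assoc (a + h)) vnorm_sq => lip.
nra.
Qed.

Lemma descent_lemma x y : F y <= F x + dot (G x) (vsub y x) + L / 2 * nsq (vsub y x).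
Proof.
set d := vsub y x; set D := dot (G x) d; set Q := nsq d.
have Q0 : 0 <= Q := nsq_ge0 d.
suff : F y - F x - D - L / 2 * Q <= 0 by lra.
apply: (le0_of_le_inv_nat (C := L * Q / 2)) => [|N N0]; first nra.
have N0' : 0 < INR N by apply: lt_0_INR; apply/ltP.
have partial k : F (ray x d (INR k / INR N)) - F x
    <= INR k / INR N * D + L * Q * (INR k * (INR k + 1)) / (2 * (INR N * INR N)).
  elim: k => [|k IH]; first by rewrite /= /Rdiv Rmult_0_l ray0; right; field; lra.
  have k0 := pos_INR k.
  have kN0 : 0 <= INR k / INR N by apply: Rmult_le_pos => //; left; apply: Rinv_0_lt_compat.
  have N0'' : 0 <= / INR N by left; apply: Rinv_0_lt_compat.
  have /(_ N0'') := @ray_increment_le x d (INR k / INR N) (/ INR N).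
  have /[swap]/[apply] : 0 <= INR k / INR N + / INR N by lra.
  have -> : INR k / INR N + / INR N = INR k.+1 / INR N by rewrite S_INR; field; lra.
  rewrite -/D -/Q S_INR => step.
  have -> : (INR k + 1) / INR N * D + L * Q * ((INR k + 1) * (INR k + 1 + 1)) / (2 * (INR N * INR N))
          = INR k / INR N * D + L * Q * (INR k * (INR k + 1)) / (2 * (INR N * INR N))
            + / INR N * (D + L * ((INR k + 1) / INR N) * Q) by field; lra.
  lra.
have := partial N.
have -> : ray x d (INR N / INR N) = y.
  by apply: functional_extensionality => b; rewrite /ray /d /vsub; field; lra.
have -> : INR N / INR N * D + L * Q * (INR N * (INR N + 1)) / (2 * (INR N * INR N))
        = D + L / 2 * Q + L * Q / 2 * / INR N by field; lra.
lra.
Qed.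


Lemma x_step_descent p l (A : mat p q) (B : mat p l) v xk x1 xs lk w1 rho eta cc :
  0 < eta -> eta * L <= cc ->
  (forall x, x_step_objective A B v xk lk w1 rho (/ (2 * eta)) cc x1
             <= x_step_objective A B v xk lk w1 rho (/ (2 * eta)) cc x) ->
  gnorm2 cc (vsub x1 xs) <= gnorm2 cc (vsub xk xs)
     - 2 * eta * (F x1 - F xs)
     - 2 * eta * dot (vsub v (G xk)) (vsub x1 xs)
     + 2 * eta * dot (tmv A (vadd lk (vscal rho (vadd (mv A x1) (mv B w1))))) (vsub xs x1).
Proof.
move=> eta0 etaL /x_step_optimality opt; have {opt} := opt xs.
set T := dot (tmv A _) _; rewrite /gnorm2.
have three_points : 2 * dot (vsub x1 xk) (vsub xs x1)
    = nsq (vsub xk xs) - nsq (vsub x1 xs) - nsq (vsub x1 xk) by vec_ring.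
have split_v : dot v (vsub xs x1) = dot (G xk) (vsub xs x1) - dot (vsub v (G xk)) (vsub x1 xs).
  by vec_ring.
have lin_model : dot (G xk) (vsub xs x1) <= F xs - F x1 + L / 2 * nsq (vsub x1 xk).
  have := convex_gradient_ineq xk xs; have := descent_lemma xk x1.
  have -> : dot (G xk) (vsub xs x1) = dot (G xk) (vsub xs xk) - dot (G xk) (vsub x1 xk) by vec_ring.
  lra.
rewrite split_v => opt.
have {}opt : 0 <= 2 * eta * (dot (G xk) (vsub xs x1) - dot (vsub v (G xk)) (vsub x1 xs) + T)
                      + cc * (nsq (vsub xk xs) - nsq (vsub x1 xs) - nsq (vsub x1 xk)).
  rewrite -three_points.
  have -> : cc * (2 * dot (vsub x1 xk) (vsub xs x1))
          = 2 * eta * (2 * / (2 * eta) * cc * dot (vsub x1 xk) (vsub xs x1)) by field; lra.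
  rewrite -Rmult_plus_distr_l; apply: Rmult_le_pos; lra.
have N0 := nsq_ge0 (vsub x1 xk).
have : 2 * eta * dot (G xk) (vsub xs x1) <= 2 * eta * (F xs - F x1 + L / 2 * nsq (vsub x1 xk)).
  by apply: Rmult_le_compat_l; lra.
have : eta * L * nsq (vsub x1 xk) <= cc * nsq (vsub x1 xk) by apply: Rmult_le_compat_r.
lra.
Qed.

End SmoothConvex.

Section CompositionalObjective.
Variables (n m q r : nat).
Variables (g : 'I_m -> vec q -> vec r) (Jg : 'I_m -> vec q -> mat r q)
          (f : 'I_n -> vec r -> R) (gf : 'I_n -> vec r -> vec r).
Hypothesis n0 : (0 < n)%N.
Hypothesis m0 : (0 < m)%N.

Lemma tmv_Jbar x w : tmv (Jbar Jg x) w = vscal (/ INR m) (vsum (fun j => tmv (Jg j x) w)).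
Proof.
apply: functional_extensionality => b; rewrite /tmv /Jbar /vscal /vsum rsum_exch -rsumZ.
by apply: rsum_ext => a; rewrite Rmult_assoc rsumZr.
Qed.

Lemma gradF_dot x d : dot (gradF g Jg gf x) d
  = / INR n * rsum (fun i => / INR m * rsum (fun j => dot (tmv (Jg j x) (gf i (gbar g x))) d)).
Proof.
rewrite /gradF dotZl dot_vsuml; congr (_ * _); apply: rsum_ext => i.
by rewrite tmv_Jbar dotZl dot_vsuml.
Qed.

Lemma Fobj_dir_deriv :
  (forall j, has_jacobian (g j) (Jg j)) -> (forall i, has_gradient (f i) (gf i)) ->
  forall x d, dir_deriv (Fobj g f) x d (dot (gradF g Jg gf x) d).
Proof.
move=> g_jac f_grad x d; rewrite gradF_dot; apply: dir_deriv_avg => // i.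
have -> : / INR m * rsum (fun j => dot (tmv (Jg j x) (gf i (gbar g x))) d)
        = dot (gf i (gbar g x)) (vscal (/ INR m) (vsum (fun j => mv (Jg j x) d))).
  rewrite dotC dotZl dot_vsuml; congr (_ * _); apply: rsum_ext => j.
  by rewrite dot_tmv dotC.
apply: dir_deriv_comp (f_grad i).
exact: vdir_deriv_avg (fun j => jacobian_vdir_deriv x d (g_jac j)).
Qed.

Lemma gradF_lipschitz LF :
  (forall i j x y,
     vnorm (vsub (tmv (Jg j x) (gf i (gbar g x))) (tmv (Jg j y) (gf i (gbar g y))))
       <= LF * vnorm (vsub x y)) ->
  forall x y d, dot (gradF g Jg gf y) d - dot (gradF g Jg gf x) d
                <= LF * vnorm (vsub y x) * vnorm d.
Proof.
move=> lip x y d; rewrite !gradF_dot -Rmult_minus_distr_l -rsumB.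
apply: avg_le => // i; rewrite -Rmult_minus_distr_l -rsumB; apply: avg_le => // j.
set gy := tmv (Jg j y) _; set gx := tmv (Jg j x) _.
have -> : dot gy d - dot gx d = dot (vsub gy gx) d by vec_ring.
apply: Rle_trans (dot_le _ _) _; apply: Rmult_le_compat_r; first exact: vnorm_ge0.
exact: lip.
Qed.

Lemma Fobj_convex : (forall i, convex (Fi g f i)) -> convex (Fobj g f).
Proof.
move=> Fi_convex x y t t01; have n0' : 0 < INR n by apply/lt_0_INR/ltP.
rewrite /Fobj.
have -> : t * (/ INR n * rsum (fun i => Fi g f i x)) + (1 - t) * (/ INR n * rsum (fun i => Fi g f i y))
        = / INR n * rsum (fun i => t * Fi g f i x + (1 - t) * Fi g f i y) by rewrite rsumD !rsumZ; ring.
apply: Rmult_le_compat_l; first by left; apply: Rinv_0_lt_compat.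
by apply: rsum_le => i; apply: Fi_convex.
Qed.

End CompositionalObjective.

Lemma weighted_double_sum_le n m C u (a b c d e : 'I_n -> 'I_m -> R) : 0 <= C ->
  (forall i j, a i j <= b i j - u * c i j - u * d i j + u * e i j) ->
  C * rsum (fun i => rsum (fun j => a i j))
  <= C * rsum (fun i => rsum (fun j => b i j)) - u * (C * rsum (fun i => rsum (fun j => c i j)))
     - u * (C * rsum (fun i => rsum (fun j => d i j)))
     + u * (C * rsum (fun i => rsum (fun j => e i j))).
Proof.
move=> C0 abcde.
have -> : C * rsum (fun i => rsum (fun j => b i j)) - u * (C * rsum (fun i => rsum (fun j => c i j)))
          - u * (C * rsum (fun i => rsum (fun j => d i j)))
          + u * (C * rsum (fun i => rsum (fun j => e i j)))
        = C * rsum (fun i => rsum (fun j => b i j - u * c i j - u * d i j + u * e i j)).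
  have inner i : rsum (fun j => b i j - u * c i j - u * d i j + u * e i j)
      = rsum (fun j => b i j) - u * rsum (fun j => c i j) - u * rsum (fun j => d i j)
        + u * rsum (fun j => e i j) by rewrite rsumD !rsumB !rsumZ.
  by rewrite (rsum_ext inner) rsumD !rsumB !rsumZ; ring.
apply: Rmult_le_compat_l => //.
by apply: rsum_le => i; apply: rsum_le => j; apply: abcde.
Qed.

Lemma nonincreasing_ge_last (u : nat -> R) N :
  (forall k, (k < N)%N -> u k.+1 <= u k) -> forall k, (k <= N)%N -> u N <= u k.
Proof.
move=> u_dec k kN.
suff /(_ (N - k)%N) : forall j, (k + j <= N)%N -> u (k + j)%N <= u k by rewrite subnKC //; apply.
elim=> [|j IH] kjN; first by rewrite addn0; lra.
apply: Rle_trans (IH _); last lia.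
by rewrite addnS; apply: u_dec; lia.
Qed.

Theorem lemma8 (n m p q r l : nat)
  (g : 'I_m -> vec q -> vec r) (Jg : 'I_m -> vec q -> mat r q)
  (f : 'I_n -> vec r -> R) (gf : 'I_n -> vec r -> vec r)
  (Rw : vec l -> R) (A : mat p q) (B : mat p l)
  (xs : vec q) (ws : vec l) (ls : vec p) (LF : R)
  (S K : nat) (rho : R) (c : nat -> nat -> R)
  (xhat0 : vec q) (what0 : vec l) (lhat0 : vec p)
  (X : spath n m -> nat -> nat -> vec q) (W : spath n m -> nat -> nat -> vec l)
  (Lam : spath n m -> nat -> nat -> vec p) (Xt : spath n m -> nat -> vec q) :
  (0 < n)%N -> (0 < m)%N -> (0 < p)%N -> (0 < q)%N -> (0 < r)%N -> (0 < l)%N ->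
  (forall j, C1_map (g j) (Jg j)) ->
  (forall i, C1_scalar (f i) (gf i)) ->
  (forall i, convex (Fi g f i)) -> convex Rw -> lsc Rw ->
  opt_primal_dual g f Rw A B xs ws ls ->
  0 < LF ->
  (forall i j x y,
     vnorm (vsub (tmv (Jg j x) (gf i (gbar g x))) (tmv (Jg j y) (gf i (gbar g y))))
       <= LF * vnorm (vsub x y)) ->
  (1 <= S)%N -> (1 <= K)%N -> 0 < rho ->
  (forall s, (1 <= s <= S)%N ->
     c s 0%N = / INR s /\ c s K.-1 = / INR s.+1 /\ c s K = / INR s.+1 /\
     (forall k, (k < K)%N -> c s k.+1 <= c s k)) ->
  IsRun g Jg f gf Rw A B S K rho (fun s => / (INR s.+1 * LF)) c xhat0 what0 lhat0 X W Lam Xt ->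
  (exists M, forall xi s k, (s <= S)%N -> (k <= K)%N ->
     vnorm (X xi s k) <= M /\ vnorm (Xt xi s) <= M) ->
  forall s k, (1 <= s <= S)%N -> (k < K)%N ->
  forall xi : spath n m,
  let eta := / (INR s.+1 * LF) in
  let E := fun h : spath n m -> R =>
     / (INR n * INR m) * rsum (fun i => rsum (fun j => h (upd xi s k (i, j)))) in
  E (fun z => gnorm2 (c s k) (vsub (X z s k.+1) xs))
  <= E (fun z => gnorm2 (c s k) (vsub (X z s k) xs))
     - 2 * eta * E (fun z => Fobj g f (X z s k.+1) - Fobj g f xs)
     - 2 * eta * E (fun z => dot (vsub (sgrad g Jg gf (z s k).1 (z s k).2 (X z s k) (Xt z s.-1))
                                       (gradF g Jg gf (X z s k)))
                                 (vsub (X z s k.+1) xs))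
     + 2 * eta * E (fun z => dot (tmv A (Lam z s k.+1)) (vsub xs (X z s k.+1))).
Proof.
move=> n0 m0 _ _ _ _ g_C1 f_C1 Fi_convex _ _ _ LF0 lip _ _ _ P1 run _ s k s_range kK xi eta E.
have g_jac j : has_jacobian (g j) (Jg j) by case: (g_C1 j).
have f_grad i : has_gradient (f i) (gf i) by case: (f_C1 i).
have [_ [c_last [_ c_dec]]] := P1 s s_range.
have s1 : 0 < INR s.+1 by apply: lt_0_INR; lia.
have eta0 : 0 < eta by apply: Rinv_0_lt_compat; apply: Rmult_lt_0_compat.
have eta_c : eta * LF <= c s k.
  have -> : eta * LF = c s K.-1 by rewrite c_last /eta; field; lra.
  by apply: (nonincreasing_ge_last (u := c s)) => [j jK|]; [apply: c_dec | ]; lia.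
rewrite /E; apply: weighted_double_sum_le => [|i j].
  by left; apply: Rinv_0_lt_compat; apply: Rmult_lt_0_compat; apply: lt_0_INR; lia.
have [_ [_ [_ [/(_ k kK) [_ [x_step ->]] _]]]] := (run (upd xi s k (i, j))).2 s s_range.
exact: (x_step_descent (Fobj_convex n0 Fi_convex) (Fobj_dir_deriv n0 m0 g_jac f_grad)
          (Rlt_le _ _ LF0) (gradF_lipschitz n0 m0 lip) xs eta0 eta_c x_step).
Qed.
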